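(* In $\mathrm{HMF}(\mathbb{C}^2,\Gamma_W,W)$, for each $1\le i\le p-1$ and $1\le j\le q-1$, the objects $K_{x,i}$ and $K_{y,j}$ are orthogonal to $K_f$ (all graded morphisms in both directions vanish).
   Context: Let $p,q\ge2$ be integers and $W=x^py+xy^q$. Let $L$ be the abelian group generated by $\vec x,\vec y,\vec c$ modulo $p\vec x+\vec y=\vec x+q\vec y=\vec c$; $S=\mathbb{C}[x,y]$ is $L$-graded with $\deg x=\vec x$, $\deg y=\vec y$, and $R=S/(W)$; $M(l)_k=M_{k+l}$. $\mathrm{HMF}(\mathbb{C}^2,\Gamma_W,W)$ is the homotopy category of $L$-graded matrix factorisations of $W$, equivalent to $D^b(\mathrm{gr}R)/\mathrm{Perf}(\mathrm{gr}R)$, in which a finitely generated $L$-graded $R$-module is identified with its stabilisation; $\mathrm{Hom}^n(X,Y)=\mathrm{Hom}(X,Y[n])$. Let $f=x^{p-1}+y^{q-1}$. $K_x=R/(x)$, $K_y=R/(y)$, $K_f=R/(f)$, $K_{x,i}=K_x((i+1-p)\vec x)$, $K_{y,j}=K_y((j+1-q)\vec y)$. *)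

From mathcomp Require Import all_boot all_algebra.
From mathcomp Require Import Rstruct complex.
From mathcomp Require Import mpoly.

Set Implicit Arguments.
Unset Strict Implicit.
Unset Printing Implicit Defensive.

Import GRing.Theory.
Local Open Scope ring_scope.

Definition CC : comNzRingType := complex Rdefinitions.R.

Definition S := {mpoly CC[2]}.
Definition ix : 'I_2 := @Ordinal 2 0 isT.
Definition iy : 'I_2 := @Ordinal 2 1 isT.
Definition X : S := 'X_ix.
Definition Y : S := 'X_iy.

(** Elements of L are represented by triples (a,b,k) standing for
    a*x + b*y + k*c; two triples represent the same element of L iff their
    difference lies in the subgroup generated by the relations
    p x + y - c and x + q y - c. *)
Definition Ldeg := (int * int * int)%type.

Definition Ladd (u v : Ldeg) : Ldeg := (u.1.1 + v.1.1, u.1.2 + v.1.2, u.2 + v.2).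
Definition Lopp (u : Ldeg) : Ldeg := (- u.1.1, - u.1.2, - u.2).
Definition Lsub (u v : Ldeg) : Ldeg := Ladd u (Lopp v).
Definition Lx : Ldeg := (1, 0, 0).
Definition Ly : Ldeg := (0, 1, 0).
Definition Lc : Ldeg := (0, 0, 1).

Definition Leq (p q : nat) (u v : Ldeg) : Prop :=
  exists m n : int,
    [/\ u.1.1 - v.1.1 = m * p%:Z + n,
        u.1.2 - v.1.2 = m + n * q%:Z
      & u.2 - v.2 = - (m + n)].

Definition mdegL (m : 'X_{1..2}) : Ldeg := ((m ix)%:Z, (m iy)%:Z, 0).

(** P is L-homogeneous of degree d (0 is homogeneous of every degree). *)
Definition Lhomog (p q : nat) (d : Ldeg) (P : S) : Prop :=
  forall m, m \in msupp P -> Leq p q (mdegL m) d.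

Definition W (p q : nat) : S := X ^+ p * Y + X * Y ^+ q.
Definition fpoly (p q : nat) : S := X ^+ p.-1 + Y ^+ q.-1.

(** An L-graded matrix factorisation of W of rank one:
      X0 --f0--> X1 --f1--> X0(c),  with X0 = S(d0), X1 = S(d1)
    (S(l)_k = S_(k+l)); f0 is homogeneous of degree d1 - d0, f1 of degree
    d0 + c - d1, and f0 f1 = W.  All objects we need are of rank one. *)
Record MF1 := mkMF1 { d0 : Ldeg; d1 : Ldeg; f0 : S; f1 : S }.

Definition twist (l : Ldeg) (M : MF1) : MF1 :=
  mkMF1 (Ladd (d0 M) l) (Ladd (d1 M) l) (f0 M) (f1 M).

Definition shift1 (M : MF1) : MF1 :=
  mkMF1 (d1 M) (Ladd (d0 M) Lc) (- f1 M) (- f0 M).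
Definition shiftm1 (M : MF1) : MF1 :=
  mkMF1 (Lsub (d1 M) Lc) (d0 M) (- f1 M) (- f0 M).

Definition shift (n : int) (M : MF1) : MF1 :=
  match n with
  | Posz k => iter k shift1 M
  | Negz k => iter k.+1 shiftm1 M
  end.

Definition is_mor (p q : nat) (M N : MF1) (g0 g1 : S) : Prop :=
  [/\ Lhomog p q (Lsub (d0 N) (d0 M)) g0,
      Lhomog p q (Lsub (d1 N) (d1 M)) g1,
      g1 * f0 M = f0 N * g0
    & g0 * f1 M = f1 N * g1].

Definition null_homotopic (p q : nat) (M N : MF1) (g0 g1 : S) : Prop :=
  exists t s : S,
    [/\ Lhomog p q (Lsub (d0 N) (d1 M)) t,
        Lhomog p q (Lsub (Lsub (d1 N) Lc) (d0 M)) s,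
        g0 = t * f0 M + f1 N * s
      & g1 = f0 N * t + s * f1 M].

Definition hom_zero (p q : nat) (M N : MF1) : Prop :=
  forall g0 g1, is_mor p q M N g0 g1 -> null_homotopic p q M N g0 g1.

(** M and N are orthogonal: Hom^n(M,N) = Hom(M, N[n]) = 0 and
    Hom^n(N,M) = 0 for all n. *)
Definition mf_orthogonal (p q : nat) (M N : MF1) : Prop :=
  forall n : int, hom_zero p q M (shift n N) /\ hom_zero p q N (shift n M).

(** Stabilisations of the modules.  The stabilisation of R/(g) for
    W = g h is the matrix factorisation S(-c) --h--> S(-deg g) --g--> S,
    whose cokernel (of the last map) is R/(g). *)
Definition Kx (p q : nat) : MF1 :=
  mkMF1 (Lopp Lc) (Lopp Lx) (X ^+ p.-1 * Y + Y ^+ q) X.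
Definition Ky (p q : nat) : MF1 :=
  mkMF1 (Lopp Lc) (Lopp Ly) (X ^+ p + X * Y ^+ q.-1) Y.
(* deg f = (p-1) x = c - x - y *)
Definition Kf (p q : nat) : MF1 :=
  mkMF1 (Lopp Lc) (Lsub (Ladd Lx Ly) Lc) (X * Y) (fpoly p q).

Definition Kxi (p q : nat) (i : nat) : MF1 :=
  twist ((i%:Z + 1 - p%:Z), 0, 0) (Kx p q).
Definition Kyj (p q : nat) (j : nat) : MF1 :=
  twist (0, (j%:Z + 1 - q%:Z), 0) (Ky p q).

(* All objects are matrix factorisations of rank one, and a shift by an even
   (resp. odd) integer is a twist by a multiple of c of the factorisation
   itself (resp. of its shift [1]).  Exchanging x and y carries K_{y,j} for
   (p, q) to K_{x,j} for (q, p) and fixes K_f, so only K_{x,i} needs treating.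
   For an even shift, a morphism is given by a homogeneous g with g f
   divisible by x; as y^(q-1) is a monomial of f, x divides g, and g / x is a
   null-homotopy.  For an odd shift, the morphism is given by a homogeneous g
   whose degree, because 1 <= i <= p-1, is not the degree in L of any pure
   power y^b with b < q-1; hence g lies in the ideal (x, f), and a
   decomposition g = x s + f t yields the homotopy. *)

From mathcomp Require Import all_boot all_algebra.
From mathcomp Require Import Rstruct complex.
From mathcomp Require Import mpoly.
From mathcomp Require Import fingroup perm zify ring.

Set Implicit Arguments.
Unset Strict Implicit.
Unset Printing Implicit Defensive.

Import GRing.Theory.
Local Open Scope ring_scope.

Lemma LaddE (u v : Ldeg) : Ladd u v = u + v.
Proof. by []. Qed.

Lemma LsubE (u v : Ldeg) : Lsub u v = u - v.
Proof. by []. Qed.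

Lemma Leq_trans p q u v w : Leq p q u v -> Leq p q v w -> Leq p q u w.
Proof.
case=> m [n] [e1 e2 e3] [m' [n'] [e1' e2' e3']].
by exists (m + m'), (n + n'); split; lia.
Qed.

Tactic Notation "Leq_by" uconstr(m) uconstr(n) :=
  exists m, n; rewrite /Lsub /Ladd /Lopp /Lx /Ly /Lc /=; split; lia.

Tactic Notation "Leq_shift" hyp(h) uconstr(dm) uconstr(dn) :=
  let m := fresh "m" in let n := fresh "n" in
  let e1 := fresh "e" in let e2 := fresh "e" in let e3 := fresh "e" in
  case: h => m [n] [e1 e2 e3];
  rewrite /Lsub /Ladd /Lopp /Lx /Ly /Lc /= in e1 e2 e3; Leq_by (m + dm) (n + dn).

Definition mxy (a b : nat) : 'X_{1..2} := (U_(ix) *+ a + U_(iy) *+ b)%MM.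

Lemma ord2_cases (j : 'I_2) : j = ix \/ j = iy.
Proof. by case: j => [[|[|j]]] hj; [left | right | ]; try exact: val_inj. Qed.

Lemma mxy_ix a b : mxy a b ix = a.
Proof. by rewrite /mxy mnmDE !mulmnE !mnm1E /= mul1n mul0n addn0. Qed.

Lemma mxy_iy a b : mxy a b iy = b.
Proof. by rewrite /mxy mnmDE !mulmnE !mnm1E /= mul1n mul0n. Qed.

Lemma mxyE (m : 'X_{1..2}) : m = mxy (m ix) (m iy).
Proof. by apply/mnmP=> j; case: (ord2_cases j) => ->; rewrite ?mxy_ix ?mxy_iy. Qed.

Lemma mxyD a b a' b' : (mxy a b + mxy a' b')%MM = mxy (a + a') (b + b').
Proof.
by apply/mnmP=> j; rewrite mnmDE; case: (ord2_cases j) => ->; rewrite ?mxy_ix ?mxy_iy.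
Qed.

Lemma lem_mxy a b a' b' :
  (mxy a b <= mxy a' b')%MM = (a <= a')%N && (b <= b')%N.
Proof.
apply/mnm_lepP/andP => [le_m | [le_a le_b] j].
  by have := le_m ix; have := le_m iy; rewrite !mxy_ix !mxy_iy.
by case: (ord2_cases j) => ->; rewrite ?mxy_ix ?mxy_iy.
Qed.

Lemma mpolyX_mxy a b : 'X_[mxy a b] = X ^+ a * Y ^+ b :> S.
Proof. by rewrite /mxy mpolyXD !mpolyXn. Qed.

Lemma XE : X = 'X_[mxy 1 0].
Proof. by rewrite mpolyX_mxy mulr1. Qed.

Lemma mcoeffMX_nle (P : S) m' m : ~~ (m' <= m)%MM -> (P * 'X_[m'])@_m = 0.
Proof.
move=> nle; apply/eqP; rewrite mcoeff_eq0 (perm_mem (msuppMX _ _)).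
by apply/mapP=> -[m'' _ def_m]; move: nle; rewrite def_m lem_addr.
Qed.

Lemma mulXI (P Q : S) : X * P = X * Q -> P = Q.
Proof.
move=> e; apply/mpolyP=> m; have := congr1 (mcoeff (mxy 1 0 + m)) e.
by rewrite ![X * _]mulrC XE !mcoeffMX.
Qed.

Lemma mcoeff_mulX_pure_y (Q : S) b : (X * Q)@_(mxy 0 b) = 0.
Proof. by rewrite mulrC XE mcoeffMX_nle // lem_mxy. Qed.

Section Homogeneity.
Variables p q : nat.

Lemma Lhomog0 d : Lhomog p q d 0.
Proof. by move=> m; rewrite msupp0. Qed.

Lemma LhomogD d P Q : Lhomog p q d P -> Lhomog p q d Q -> Lhomog p q d (P + Q).
Proof. by move=> hP hQ m /msuppD_le; rewrite mem_cat => /orP[/hP | /hQ]. Qed.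

Lemma LhomogZ d c P : Lhomog p q d P -> Lhomog p q d (c *: P).
Proof. by move=> hP m /msuppZ_le /hP. Qed.

Lemma LhomogN d P : Lhomog p q d P -> Lhomog p q d (- P).
Proof. by move=> hP m; rewrite (perm_mem (msuppN _)) => /hP. Qed.

Lemma Lhomog_Leq d d' P : Leq p q d d' -> Lhomog p q d P -> Lhomog p q d' P.
Proof. by move=> hd hP m /hP /Leq_trans; apply. Qed.

Lemma LhomogXY d a b : Leq p q (a%:Z, b%:Z, 0) d -> Lhomog p q d (X ^+ a * Y ^+ b).
Proof.
by rewrite -mpolyX_mxy => hd m; rewrite msuppX mem_seq1 => /eqP ->; rewrite /mdegL mxy_ix mxy_iy.
Qed.

Definition homog_comb (A B : S) (Da Db : Ldeg) (h : S) :=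
  exists s t, [/\ h = A * s + B * t, Lhomog p q Da s & Lhomog p q Db t].

Lemma homog_comb_monomials A B Da Db D h :
  Lhomog p q D h ->
  (forall a b : nat, Leq p q (a%:Z, b%:Z, 0) D -> h@_(mxy a b) != 0 ->
     homog_comb A B Da Db (X ^+ a * Y ^+ b)) ->
  homog_comb A B Da Db h.
Proof.
move=> hh hmon; rewrite (mpolyE h) big_seq.
apply: (big_ind (homog_comb A B Da Db)) => [|u v [s [t [-> hs ht]]] [s' [t' [-> hs' ht']]] | m hm].
- by exists 0, 0; split; [rewrite !mulr0 addr0 | exact: Lhomog0..].
- exists (s + s'), (t + t'); split; [by rewrite !mulrDr addrACA | exact: LhomogD..].
have [s [t [e hs ht]]] : homog_comb A B Da Db 'X_[m].
  have := hh m hm; rewrite (mxyE m) mpolyX_mxy /mdegL mxy_ix mxy_iy => hd.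
  by apply: hmon hd _; rewrite -mxyE -mcoeff_msupp.
exists (h@_m *: s), (h@_m *: t).
by split; [rewrite e scalerDr !scalerAr | exact: LhomogZ..].
Qed.

End Homogeneity.

Lemma null_homotopic_by_s p q M N g0 g1 s :
  Lhomog p q (Lsub (Lsub (d1 N) Lc) (d0 M)) s ->
  g0 = f1 N * s -> g1 = s * f1 M -> null_homotopic p q M N g0 g1.
Proof.
move=> hs e0 e1; exists 0, s.
by split; [exact: Lhomog0 | | rewrite mul0r add0r | rewrite mulr0 add0r].
Qed.

Lemma twist0 M : twist (0, 0, 0) M = M.
Proof. by case: M => d0 d1 f0 f1; rewrite /twist !LaddE !addr0. Qed.

Lemma twistD l l' M : twist l (twist l' M) = twist (Ladd l' l) M.
Proof. by rewrite /twist /= !LaddE !addrA. Qed.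

Lemma shift1_twist l M : shift1 (twist l M) = twist l (shift1 M).
Proof. by rewrite /shift1 /twist /= !LaddE addrAC. Qed.

Lemma shift1K M : shift1 (shift1 M) = twist Lc M.
Proof. by rewrite /shift1 /twist /= !opprK. Qed.

Lemma shiftm1E M : shiftm1 M = twist (Lopp Lc) (shift1 M).
Proof. by rewrite /shiftm1 /shift1 /twist /= LsubE !LaddE addrK. Qed.

Lemma shift_cases n M : exists k : int,
  shift n M = twist (0, 0, k) M \/ shift n M = twist (0, 0, k) (shift1 M).
Proof.
have twist_cases F : (forall k, exists k',
         F (twist (0, 0, k) M) = twist (0, 0, k') (shift1 M)) ->
    (forall k, exists k',
         F (twist (0, 0, k) (shift1 M)) = twist (0, 0, k') M) ->
    forall j, exists k, iter j F M = twist (0, 0, k) M \/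
                        iter j F M = twist (0, 0, k) (shift1 M).
  move=> Fev Fodd; elim=> [|j [k [E | E]]]; first by exists 0; left; rewrite twist0.
  - by have [k' E'] := Fev k; exists k'; right; rewrite iterS E.
  - by have [k' E'] := Fodd k; exists k'; left; rewrite iterS E.
case: n => j; rewrite /shift; apply: twist_cases => k.
- by exists k; rewrite shift1_twist.
- by exists (1 + k); rewrite shift1_twist shift1K twistD.
- by exists (k - 1); rewrite shiftm1E shift1_twist twistD.
- by exists (1 + (k - 1)); rewrite shiftm1E shift1_twist shift1K !twistD.
Qed.

Lemma hom_zero_shift p q M N :
  (forall k, hom_zero p q M (twist (0, 0, k) N)) ->
  (forall k, hom_zero p q M (twist (0, 0, k) (shift1 N))) ->
  forall n, hom_zero p q M (shift n N).
Proof. by move=> hev hodd n; have [k [-> | ->]] := shift_cases n N. Qed.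

Definition swapXY_def (P : S) : S := msym (tperm ix iy) P.
Fact swapXY_key : unit. Proof. by []. Qed.
Definition swapXY := locked_with swapXY_key swapXY_def.
Canonical swapXY_unlockable := [unlockable fun swapXY].

Lemma swapXYD (P Q : S) : swapXY (P + Q) = swapXY P + swapXY Q.
Proof. by rewrite unlock; apply: msymD. Qed.

Lemma swapXYM (P Q : S) : swapXY (P * Q) = swapXY P * swapXY Q.
Proof. by rewrite unlock; apply: msymM. Qed.

Lemma swapXYN (P : S) : swapXY (- P) = - swapXY P.
Proof. by rewrite unlock; apply: msymN. Qed.

Lemma swapXYXn (P : S) k : swapXY (P ^+ k) = swapXY P ^+ k.
Proof. by rewrite unlock; apply: rmorphXn. Qed.

Lemma swapXY_X : swapXY X = Y.
Proof. by rewrite unlock /swapXY_def /msym /X mmapX mmap1U tpermL. Qed.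

Lemma swapXY_Y : swapXY Y = X.
Proof. by rewrite unlock /swapXY_def /msym /Y mmapX mmap1U tpermR. Qed.

Lemma swapXYK (P : S) : swapXY (swapXY P) = P.
Proof. by rewrite unlock /swapXY_def -msymMm tperm2 msym1m. Qed.

Definition swapL (u : Ldeg) : Ldeg := (u.1.2, u.1.1, u.2).

Lemma swapLK u : swapL (swapL u) = u.
Proof. by case: u => [[]]. Qed.

Lemma swapL_sub u v : swapL (Lsub u v) = Lsub (swapL u) (swapL v).
Proof. by []. Qed.

Definition swapMF (M : MF1) : MF1 :=
  mkMF1 (swapL (d0 M)) (swapL (d1 M)) (swapXY (f0 M)) (swapXY (f1 M)).

Lemma Leq_swap p q u v : Leq p q u v -> Leq q p (swapL u) (swapL v).
Proof. by case=> m [n] [e1 e2 e3]; exists n, m; split=> /=; lia. Qed.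

Lemma Lhomog_swap p q d (P : S) : Lhomog p q d P -> Lhomog q p (swapL d) (swapXY P).
Proof.
move=> hP m; rewrite unlock mcoeff_msupp mcoeff_sym -mcoeff_msupp => /hP /Leq_swap.
by rewrite /mdegL !mnmE tpermL tpermR.
Qed.

Lemma is_mor_swap p q M N g0 g1 : is_mor q p (swapMF M) (swapMF N) g0 g1 ->
  is_mor p q M N (swapXY g0) (swapXY g1).
Proof.
rewrite /is_mor /swapMF; cbn [d0 d1 f0 f1].
case=> /Lhomog_swap H0 /Lhomog_swap H1 E1 E2.
rewrite !swapL_sub !swapLK in H0 H1.
split=> //; [move/(congr1 swapXY): E1 | move/(congr1 swapXY): E2].
all: by rewrite !swapXYM !swapXYK.
Qed.

Lemma null_homotopic_by_swap p q M N g0 g1 : null_homotopic p q M N g0 g1 ->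
  null_homotopic q p (swapMF M) (swapMF N) (swapXY g0) (swapXY g1).
Proof.
case=> t [s] [/Lhomog_swap Ht /Lhomog_swap Hs -> ->]; exists (swapXY t), (swapXY s).
rewrite /swapMF; cbn [d0 d1 f0 f1].
by split; [exact Ht | exact Hs | rewrite swapXYD !swapXYM..].
Qed.

Lemma hom_zero_swap p q M N : hom_zero p q M N -> hom_zero q p (swapMF M) (swapMF N).
Proof.
move=> hMN g0 g1 /is_mor_swap /hMN /null_homotopic_by_swap.
by rewrite !swapXYK.
Qed.

Lemma shift_swap n M : shift n (swapMF M) = swapMF (shift n M).
Proof.
have iter_swap F : (forall M, F (swapMF M) = swapMF (F M)) ->
    forall j, iter j F (swapMF M) = swapMF (iter j F M).
  by move=> FE; elim=> //= j ->.
by case: n => j; apply: iter_swap => M'; rewrite /shift1 /shiftm1 /swapMF !swapXYN.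
Qed.

Lemma mf_orthogonal_swap p q M N :
  mf_orthogonal p q M N -> mf_orthogonal q p (swapMF M) (swapMF N).
Proof.
move=> hMN n; rewrite !shift_swap.
by case: (hMN n); split; exact: hom_zero_swap.
Qed.

Lemma Kyj_swap p q j : Kyj p q j = swapMF (Kxi q p j).
Proof.
rewrite /Kyj /Kxi /twist /Ky /Kx /swapMF; cbn [d0 d1 f0 f1]; congr mkMF1.
  by rewrite swapXYD swapXYM !swapXYXn swapXY_X swapXY_Y addrC mulrC.
by rewrite swapXY_X.
Qed.

Lemma Kf_swap p q : Kf p q = swapMF (Kf q p).
Proof.
rewrite /Kf /fpoly /swapMF; cbn [d0 d1 f0 f1]; congr mkMF1.
  by rewrite swapXYM swapXY_X swapXY_Y mulrC.
by rewrite swapXYD !swapXYXn swapXY_X swapXY_Y addrC.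
Qed.

Section KxKf.
Variables p q : nat.
Hypotheses (hp : (2 <= p)%N) (hq : (2 <= q)%N).
Local Notation f := (fpoly p q).

Lemma Kx_f0E : X ^+ p.-1 * Y + Y ^+ q = Y * f.
Proof.
have -> : Y ^+ q = Y * Y ^+ q.-1 by rewrite -exprS prednK // ltnW.
by rewrite /fpoly; ring.
Qed.

Lemma mcoeff_mulf_pure_y (P : S) b : (P * f)@_(mxy 0 (q.-1 + b)) = P@_(mxy 0 b).
Proof.
have XpE : X ^+ p.-1 = 'X_[mxy p.-1 0] by rewrite mpolyX_mxy mulr1.
have YqE : Y ^+ q.-1 = 'X_[mxy 0 q.-1] by rewrite mpolyX_mxy mul1r.
rewrite /fpoly mulrDr mcoeffD XpE YqE -[mxy 0 _](mxyD 0 q.-1 0 b) mcoeffMX.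
by rewrite mcoeffMX_nle ?add0r // mxyD lem_mxy; case: (p) hp => [|[]].
Qed.

Lemma mcoeff_pure_y_eq0 (P Q : S) : P * f = X * Q -> forall b, P@_(mxy 0 b) = 0.
Proof.
move=> e b; have := congr1 (mcoeff (mxy 0 (q.-1 + b))) e.
by rewrite mcoeff_mulf_pure_y mcoeff_mulX_pure_y.
Qed.

Lemma X_dvd_homog D (P : S) : Lhomog p q D P -> (forall b, P@_(mxy 0 b) = 0) ->
  exists h, P = X * h /\ Lhomog p q (Lsub D Lx) h.
Proof.
move=> hP P0; have [h [t [-> hh _]]] : homog_comb p q X 0 (Lsub D Lx) D P.
  apply: homog_comb_monomials hP _ => -[|a] b hab; first by rewrite P0 eqxx.
  exists (X ^+ a * Y ^+ b), 0; split; [by rewrite exprS mul0r addr0 mulrA | | exact: Lhomog0].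
  by apply: LhomogXY; Leq_shift hab 0 0.
by exists h; rewrite mul0r addr0.
Qed.

Lemma mulf_eq_mulX D (P Q : S) : Lhomog p q D P -> P * f = X * Q ->
  exists h, [/\ P = X * h, Q = f * h & Lhomog p q (Lsub D Lx) h].
Proof.
move=> hP e; have [h [eP hh]] := X_dvd_homog hP (mcoeff_pure_y_eq0 e).
by exists h; split=> //; apply: mulXI; rewrite -e eP mulrAC mulrA.
Qed.

Lemma homog_comb_X_f D (h : S) : Lhomog p q D h ->
    (forall b : nat, (b < q.-1)%N -> ~ Leq p q (0, b%:Z, 0) D) ->
  homog_comb p q X f (Lsub D Lx) (Lsub D (0, q.-1%:Z, 0)) h.
Proof.
move=> hh no_y; apply: homog_comb_monomials hh _ => -[|a] b hab _.
  have le_qb : (q.-1 <= b)%N by rewrite leqNgt; apply/negP => /no_y.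
  have pE : p.-1 = p.-2.+1 by case: p hp => [|[]].
  exists (- (X ^+ p.-2 * Y ^+ (b - q.-1))), (Y ^+ (b - q.-1)); split.
  - by rewrite /fpoly pE -{1}(subnKC le_qb) exprD exprS; ring.
  - by apply/LhomogN/LhomogXY; Leq_shift hab 1 (-1).
  - by rewrite -[Y ^+ _]mul1r -(expr0 X); apply: LhomogXY; Leq_shift hab 0 0.
exists (X ^+ a * Y ^+ b), 0; split; [by rewrite exprS mulr0 addr0 mulrA | | exact: Lhomog0].
by apply: LhomogXY; Leq_shift hab 0 0.
Qed.

Lemma Leq_pure_y_excl (i : nat) (b k : int) : (1 <= i <= p.-1)%N ->
  - q%:Z < b < q.-1%:Z -> ~ Leq p q (0, b, 0) (p%:Z - i%:Z, 0, k).
Proof.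
case/andP=> i_gt0 i_lt /andP[b_gt b_lt] [m [n [/= e1 e2 _]]].
have {e1 e2} eb : b = (i%:Z - p%:Z) * q%:Z - m * (p%:Z * q%:Z - 1).
  by rewrite subr0 in e2; rewrite e2 (_ : n = i%:Z - p%:Z - m * p%:Z); [ring | lia].
have pq_ge : 1 <= p%:Z * q%:Z - 1 by nia.
case: (Num.Theory.lerP 0 m) => hm; nia.
Qed.

Variables (i : nat) (k : int).
Hypothesis hi : (1 <= i <= p.-1)%N.

Lemma hom_zero_Kxi_Kf : hom_zero p q (Kxi p q i) (twist (0, 0, k) (Kf p q)).
Proof.
move=> g0 g1 [_ H1 _ E2]; rewrite /= in E2.
have [|h [-> -> hh]] := mulf_eq_mulX (Q := g0) H1; first by rewrite mulrC -E2 mulrC.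
apply: (null_homotopic_by_s (s := h)) => //; last exact: mulrC.
by apply: Lhomog_Leq hh; Leq_by 0 0.
Qed.

Lemma hom_zero_Kf_Kxi : hom_zero p q (Kf p q) (twist (0, 0, k) (Kxi p q i)).
Proof.
move=> g0 g1 [H0 _ _ E2]; rewrite /= in E2.
have [h [-> -> hh]] := mulf_eq_mulX H0 E2.
apply: (null_homotopic_by_s (s := h)) => //; last exact: mulrC.
by apply: Lhomog_Leq hh; Leq_by 0 0.
Qed.

Lemma hom_zero_Kxi_shift1_Kf :
  hom_zero p q (Kxi p q i) (twist (0, 0, k) (shift1 (Kf p q))).
Proof.
move=> g0 g1 [_ H1 _ E2]; rewrite /= in E2.
have eg0 : g0 = - (Y * g1) by apply: mulXI; rewrite mulrC E2; ring.
have [|s [t [eg1 hs ht]]] := homog_comb_X_f H1.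
  move=> b hb hL; apply: (@Leq_pure_y_excl i b k) => //; first by lia.
  by apply: Leq_trans hL _; Leq_by 0 0.
exists (- t), s; split; first by apply/LhomogN; apply: Lhomog_Leq ht; Leq_by 0 (-1).
- by apply: Lhomog_Leq hs; Leq_by 0 0.
- by rewrite /= eg0 eg1 Kx_f0E; ring.
- by rewrite /= eg1; ring.
Qed.

Lemma hom_zero_Kf_shift1_Kxi :
  hom_zero p q (Kf p q) (twist (0, 0, k) (shift1 (Kxi p q i))).
Proof.
move=> g0 g1 [_ H1 E1 _]; rewrite /= in E1.
have eg0 : g0 = - (Y * g1) by apply: mulXI; apply: oppr_inj; rewrite -mulNr -E1; ring.
have [|s [t [eg1 hs ht]]] := homog_comb_X_f H1.
  move=> b hb [m [n [/= e1 e2 e3]]].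
  apply: (@Leq_pure_y_excl i (- (b%:Z + 1)) (- (k + 1))) => //; first by lia.
  by Leq_by (- m) (- n).
exists (- s), t; split; first by apply/LhomogN; apply: Lhomog_Leq hs; Leq_by 0 0.
- by apply: Lhomog_Leq ht; Leq_by 0 (-1).
- by rewrite /= eg0 eg1 Kx_f0E; ring.
- by rewrite /= eg1; ring.
Qed.

End KxKf.

Lemma mf_orthogonal_Kxi_Kf p q i : (2 <= p)%N -> (2 <= q)%N -> (1 <= i <= p.-1)%N ->
  mf_orthogonal p q (Kxi p q i) (Kf p q).
Proof.
move=> hp hq hi n; split; apply: hom_zero_shift => k.
- exact: hom_zero_Kxi_Kf.
- exact: hom_zero_Kxi_shift1_Kf.
- exact: hom_zero_Kf_Kxi.
- exact: hom_zero_Kf_shift1_Kxi.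
Qed.

Theorem lemma2p8 (p q : nat) (hp : (2 <= p)%N) (hq : (2 <= q)%N) :
  (forall i : nat, (1 <= i <= p.-1)%N -> mf_orthogonal p q (Kxi p q i) (Kf p q)) /\
  (forall j : nat, (1 <= j <= q.-1)%N -> mf_orthogonal p q (Kyj p q j) (Kf p q)).
Proof.
split=> [i | j hj]; first exact: mf_orthogonal_Kxi_Kf.
by rewrite Kyj_swap Kf_swap; apply/mf_orthogonal_swap/mf_orthogonal_Kxi_Kf.
Qed.
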